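(* Let $q$ be a prime power, $s,\ell$ positive integers, $\alpha,\beta\in\mathbb{F}_q^*$, let $r$ be the multiplicative order of $\beta$, and assume $q\equiv 1\pmod{r\ell}$. Let $\omega\in\mathbb{F}_q$ be a primitive $r\ell$-th root of unity with $\omega^\ell=\beta$, and for $k=0,\dots,\ell-1$ let $\eta_k(y)=\prod_{j\ne k,\,0\le j\le \ell-1}\frac{y-\omega^{1+jr}}{\omega^{1+kr}-\omega^{1+jr}}$. Let $\mathcal{C}$ be an ideal of $\mathcal{R}=\mathbb{F}_q[x,y]/\langle x^s-\alpha,y^\ell-\beta\rangle$, let $I_j=\{f(x)\in\mathbb{F}_q[x]/\langle x^s-\alpha\rangle:\eta_j(y)f(x)\in\mathcal{C}\}$, let $p_j(x)$ be the unique monic divisor of $x^s-\alpha$ generating $I_j$, and let $a_j=\deg p_j(x)$, for $j=0,\dots,\ell-1$. Then the elements $$x^i p_j(x)\eta_j(y),\qquad 0\le j\le \ell-1,\ \ 0\le i\le s-a_j-1,$$ form a basis of $\mathcal{C}$ over $\mathbb{F}_q$, i.e. the matrix whose rows are (the coefficient vectors of) these elements, ordered by $j$ and then by $i$, is a generator matrix of $\mathcal{C}$.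
   Context: An element $\sum_{i,j}c_{i,j}x^iy^j$ of $\mathcal{R}$ (with $0\le i\le s-1$, $0\le j\le \ell-1$) is identified with the $s\times\ell$ array $(c_{i,j})$, i.e. a vector of length $s\ell$ over $\mathbb{F}_q$; ideals of $\mathcal{R}$ are two-dimensional $(\alpha,\beta)$-constacyclic codes. *)

From HB Require Import structures.
From mathcomp Require Import all_boot all_order all_algebra all_field.
Set Implicit Arguments. Unset Strict Implicit. Unset Printing Implicit Defensive.
Import GRing.Theory.
Local Open Scope ring_scope.

(* Elements of F[x,y] are represented as {poly {poly F}}: polynomials in the
   outer variable y whose coefficients are polynomials in the inner variable x.
   The class of P in R = F[x,y]/<x^s - alpha, y^l - beta> is identified with
   its s x l coefficient array (c_{i,j}) (coefficient of x^i y^j of the reduced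
   representative), i.e. an element of 'M[F]_(s, l). *)
Definition toR (F : fieldType) (s l : nat) (alpha beta : F)
    (P : {poly {poly F}}) : 'M[F]_(s, l) :=
  \matrix_(i < s, j < l)
    (((P %% ('X^l - (beta%:P)%:P))`_j) %% ('X^s - alpha%:P))`_i.

Definition is_idealR (F : fieldType) (s l : nat) (alpha beta : F)
    (C : {vspace 'M[F]_(s, l)}) : Prop :=
  forall P Q : {poly {poly F}},
    toR s l alpha beta P \in C -> toR s l alpha beta (Q * P) \in C.

Definition eta (F : fieldType) (l r : nat) (w : F) (k : nat) : {poly F} :=
  \prod_(0 <= j < l | j != k)
    (('X - (w ^+ (1 + j * r))%:P) *
       ((w ^+ (1 + k * r) - w ^+ (1 + j * r))^-1)%:P).

Definition etaf (F : fieldType) (l r : nat) (w : F) (k : nat)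
    (f : {poly F}) : {poly {poly F}} :=
  f%:P * map_poly polyC (eta l r w k).

Arguments toR {F} s l alpha beta P.
Arguments is_idealR {F} s l alpha beta C.
Arguments eta {F} l r w k.
Arguments etaf {F} l r w k f.

From Pilot Require Import Defs.
From HB Require Import structures.
From mathcomp Require Import all_boot all_order all_algebra all_field.
From mathcomp Require Import zify.
Set Implicit Arguments. Unset Strict Implicit. Unset Printing Implicit Defensive.
Import GRing.Theory.
Local Open Scope ring_scope.

(* The nodes w^(1+kr), k < l, are l distinct roots of y^l - beta, and eta_k is the Lagrange
   basis for them. Since eta_k(y) (y - w^(1+kr)) is a multiple of y^l - beta, every P(x,y)
   equals sum_k eta_k(y) P(x, w^(1+kr)) in R; and sum_k eta_k(y) f_k(x) vanishes in R only if
   every f_k vanishes modulo x^s - alpha (evaluate at the nodes). An ideal C is closed under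
   multiplication by eta_k(y), so it is the direct sum of its components eta_k(y) I_k. Modulo
   x^s - alpha, every multiple g p_k of the generator of I_k reduces to a combination of the
   x^i p_k with i < s - deg p_k, and these are independent by a degree count. *)

Section SpanIota.
Variables (K : fieldType) (vT : vectType K).

Lemma span_iotaP n (v : nat -> vT) u :
  reflect (exists c : nat -> K, u = \sum_(i < n) c i *: v i)
          (u \in <<[seq v i | i <- iota 0 n]>>%VS).
Proof.
apply: (iffP idP) => [u_in|]; last first.
  case=> c ->; apply: memv_suml => i _; apply/memvZ/memv_span.
  by rewrite map_f // mem_iota add0n ltn_ord.
pose T := map_tuple v (iota_tuple n 0).
exists (fun m => oapp (fun i => coord T i u) 0 (insub m)).
rewrite {1}(coord_span (u_in : u \in <<T>>%VS)); apply: eq_bigr => i _.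
by rewrite valK /= (nth_map 0) ?size_iota // nth_iota.
Qed.

Lemma free_iota n (v : nat -> vT) :
  (forall c : nat -> K, \sum_(i < n) c i *: v i = 0 ->
     forall i, (i < n)%N -> c i = 0) ->
  free [seq v i | i <- iota 0 n].
Proof.
move=> v_indep; suff: free (map_tuple v (iota_tuple n 0)) by [].
apply/freeP => k k0 i.
have := v_indep (fun m => oapp k 0 (insub m)) _ i (ltn_ord i); rewrite valK; apply.
rewrite -[RHS]k0; apply: eq_bigr => j _.
by rewrite valK /= (nth_map 0) ?size_iota // nth_iota.
Qed.

End SpanIota.

Lemma allpairs_iota_bigcat (T : Type) l (n : nat -> nat) (v : nat -> nat -> T) :
  [seq v j i | j <- iota 0 l, i <- iota 0 (n j)] =
  \big[cat/[::]]_(j < l) [seq v j i | i <- iota 0 (n j)].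
Proof.
rewrite -(big_mkord xpredT (fun j => [seq v j i | i <- iota 0 (n j)])).
rewrite /index_iota subn0.
by elim: (iota 0 l) => [|j js IH]; rewrite ?big_nil // big_cons -IH.
Qed.

Section LagrangeNodes.
Variables (F : fieldType) (l r : nat) (w : F).
Hypothesis w_prim : (r * l).-primitive_root w.
Local Notation node k := (w ^+ (1 + k * r)).
Local Notation eta := (Defs.eta l r w).

Lemma node_inj j k : (j < l)%N -> (k < l)%N -> node j = node k -> j = k.
Proof.
move=> jl kl /eqP; rewrite (eq_prim_root_expr w_prim) eqn_modDl.
have r_gt0 : (0 < r)%N by have := prim_order_gt0 w_prim; rewrite muln_gt0 => /andP[].
rewrite !modn_small ?[(r * l)%N]mulnC ?ltn_pmul2r //.
by rewrite eqn_pmul2r // => /eqP.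
Qed.

Lemma node_expr_l k : node k ^+ l = w ^+ l.
Proof.
rewrite -exprM mulnDl mul1n exprD -mulnA [(k * _)%N]mulnC exprM.
by rewrite (prim_expr_order w_prim) expr1n mulr1.
Qed.

Lemma size_eta k : (k < l)%N -> (size (eta k) <= l)%N.
Proof.
move=> kl; rewrite /Defs.eta -big_filter big_split /= -rmorph_prod mulrC mul_polyC.
rewrite (leq_trans (size_scale_leq _ _)) // size_prod_XsubC -rem_filter ?iota_uniq //.
rewrite size_rem ?mem_index_iota ?kl // size_iota subn0 ltn_predL.
exact: leq_ltn_trans kl.
Qed.

Lemma eta_node k m : (k < l)%N -> (m < l)%N -> (eta k).[node m] = (k == m)%:R.
Proof.
move=> kl ml; rewrite /Defs.eta horner_prod; have [<- | km] := eqVneq k m.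
  rewrite big1_seq // => j /andP[jk]; rewrite mem_index_iota => /andP[_ jl].
  rewrite hornerM hornerXsubC hornerC divff // subr_eq0.
  by apply: contra jk => /eqP/(node_inj kl jl) ->.
rewrite -big_filter (bigD1_seq m) /= ?hornerM ?hornerXsubC ?subrr ?mul0r //.
  by rewrite mem_filter eq_sym km mem_index_iota ml.
exact/filter_uniq/iota_uniq.
Qed.

Lemma eta_neq0 k : (k < l)%N -> eta k != 0.
Proof.
move=> kl; apply/eqP => eta0; have := eta_node kl kl.
by rewrite eqxx eta0 horner0 => /eqP; rewrite eq_sym oner_eq0.
Qed.

Lemma nodes_poly_eq0 (p : {poly F}) : (size p <= l)%N ->
  (forall m, (m < l)%N -> p.[node m] = 0) -> p = 0.
Proof.
move=> size_p p_nodes.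
apply: (@roots_geq_poly_eq0 _ p [seq node m | m <- iota 0 l]).
- by apply/allP => x /mapP[m]; rewrite mem_iota => /andP[_ ml] ->; apply/eqP/p_nodes.
- rewrite map_inj_in_uniq ?iota_uniq // => j k.
  by rewrite !mem_iota => /andP[_ jl] /andP[_ kl]; apply: node_inj.
- by rewrite size_map size_iota.
Qed.

Lemma horner_eta_comb (c : 'I_l -> F) (m : 'I_l) :
  (\sum_(k < l) c k *: eta k).[node m] = c m.
Proof.
rewrite horner_sum (bigD1 m) //= hornerZ eta_node // eqxx mulr1 big1 ?addr0 //.
by move=> k km; rewrite hornerZ eta_node // val_eqE (negbTE km) mulr0.
Qed.

Lemma eta_comb_eq0 (c : 'I_l -> F) :
  \sum_(k < l) c k *: eta k = 0 -> forall k, c k = 0.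
Proof. by move=> c0 k; rewrite -(horner_eta_comb c k) c0 horner0. Qed.

Lemma sum_eta : (0 < l)%N -> \sum_(k < l) eta k = 1.
Proof.
move=> l_gt0; apply/eqP; rewrite -subr_eq0; apply/eqP/nodes_poly_eq0 => [|m ml].
  rewrite (leq_trans (size_polyD _ _)) // geq_max size_polyN size_poly1 l_gt0.
  by rewrite (leq_trans (size_sum _ _ _)) //; apply/bigmax_leqP => k _; apply: size_eta.
have := horner_eta_comb (fun _ => 1) (Ordinal ml).
by under eq_bigr do rewrite scale1r; rewrite hornerD hornerN hornerC => ->; rewrite subrr.
Qed.

Lemma eta_XsubC_dvd k : (k < l)%N ->
  'X^l - (w ^+ l)%:P %| eta k * ('X - (node k)%:P).
Proof.
move=> kl; have l_gt0 : (0 < l)%N by apply: leq_ltn_trans kl.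
have Yl0 : 'X^l - (w ^+ l)%:P != 0 by rewrite -size_poly_gt0 size_XnsubC.
apply/eqP/nodes_poly_eq0 => [|m ml].
  by rewrite -ltnS -(size_XnsubC (w ^+ l) l_gt0) ltn_modp.
rewrite horner_mod; last by rewrite /root !hornerE node_expr_l subrr.
rewrite hornerM hornerXsubC eta_node //.
by have [->|_] := eqVneq k m; rewrite ?subrr ?mulr0 ?mul0r.
Qed.

End LagrangeNodes.

Section Bivariate.
Variables (F : fieldType) (s l : nat) (alpha beta : F).
Hypotheses (s_gt0 : (0 < s)%N) (l_gt0 : (0 < l)%N).
Local Notation Xs := ('X^s - alpha%:P).
Local Notation toR := (toR s l alpha beta).

Lemma size_modXs (f : {poly F}) : (size (f %% Xs)%R <= s)%N.
Proof.
rewrite -ltnS -(size_XnsubC alpha s_gt0) ltn_modp.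
by rewrite -size_poly_gt0 size_XnsubC.
Qed.

Let lead_Yl_unit : lead_coef ('X^l - (beta%:P)%:P) \is a GRing.unit.
Proof. by rewrite (monicP (monicXnsubC _ l_gt0)) unitr1. Qed.

Lemma toRD : {morph toR : P Q / P + Q}.
Proof.
move=> P Q; apply/matrixP => i j; rewrite !mxE (Pdiv.IdomainUnit.modpD lead_Yl_unit).
by rewrite coefD modpD coefD.
Qed.

Lemma toR0 : toR 0 = 0.
Proof. by apply/matrixP => i j; rewrite !mxE !(mod0p, coef0). Qed.

Lemma toR_sum I (rs : seq I) (P : I -> {poly {poly F}}) :
  toR (\sum_(i <- rs) P i) = \sum_(i <- rs) toR (P i).
Proof. exact: (big_morph _ toRD toR0). Qed.

Lemma toRZ a (P : {poly {poly F}}) : toR (a%:P%:P * P) = a *: toR P.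
Proof.
apply/matrixP => i j; rewrite !mxE mul_polyC.
rewrite (Pdiv.IdomainUnit.modpZl lead_Yl_unit) coefZ mul_polyC.
by rewrite modpZl coefZ.
Qed.

Lemma toR_mulY Q : toR (Q * ('X^l - (beta%:P)%:P)) = 0.
Proof. by apply/matrixP => i j; rewrite !mxE Pdiv.CommonIdomain.modp_mull !(mod0p, coef0). Qed.

Definition sepR (e f : {poly F}) : 'M[F]_(s, l) := toR (f%:P * e^:P).

Lemma sepR_is_linear e : linear (sepR e).
Proof.
move=> a f g; rewrite /sepR polyCD mulrDl toRD -toRZ mulrA; congr (toR (_ * _) + _).
by rewrite -mul_polyC polyCM.
Qed.

HB.instance Definition _ (e : {poly F}) :=
  GRing.isLinear.Build F {poly F} 'M[F]_(s, l) *:%R (sepR e) (sepR_is_linear e).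

Lemma sepRE (e f : {poly F}) : (size e <= l)%N ->
  sepR e f = \matrix_(i, j) ((f %% Xs)`_i * e`_j).
Proof.
move=> size_e; apply/matrixP => i j; rewrite !mxE.
rewrite (@Pdiv.CommonIdomain.modp_small _ (f%:P * e^:P)); last first.
  rewrite mul_polyC size_XnsubC // (leq_ltn_trans (size_scale_leq _ _)) //.
  by rewrite size_map_polyC.
by rewrite coefCM coef_map /= mulrC mul_polyC modpZl coefZ mulrC.
Qed.

Lemma sepR_modp (e f : {poly F}) : (size e <= l)%N -> sepR e (f %% Xs) = sepR e f.
Proof. by move=> size_e; rewrite !sepRE // modp_id. Qed.

Lemma sepR_eq0 (e f : {poly F}) : e != 0 -> (size e <= l)%N -> sepR e f = 0 -> f %% Xs = 0.
Proof.
move=> e0 size_e; rewrite sepRE // => /matrixP sep0.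
have lead_lt : ((size e).-1 < l)%N.
  by rewrite prednK ?size_poly_gt0.
apply/polyP => i; rewrite coef0; have [i_lt | i_ge] := ltnP i s.
  have /eqP := sep0 (Ordinal i_lt) (Ordinal lead_lt); rewrite !mxE /=.
  by rewrite mulf_eq0 -lead_coefE lead_coef_eq0 (negbTE e0) orbF => /eqP.
by rewrite nth_default // (leq_trans (size_modXs f)).
Qed.

Lemma sepR_monomial (i : 'I_s) (j : 'I_l) : sepR 'X^j 'X^i = delta_mx i j.
Proof.
rewrite sepRE ?size_polyXn //; apply/matrixP => a b.
by rewrite !mxE modp_small ?size_XnsubC ?size_polyXn ?ltnS // !coefXn -natrM mulnb.
Qed.

Lemma toR_surj (c : 'M[F]_(s, l)) : exists P, toR P = c.
Proof.
exists (\sum_(i < s) \sum_(j < l) (c i j *: 'X^i)%:P * ('X^j)^:P).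
rewrite toR_sum [RHS]matrix_sum_delta; apply: eq_bigr => i _.
rewrite toR_sum; apply: eq_bigr => j _.
by rewrite -[toR _]/(sepR 'X^j (c i j *: 'X^i)) linearZZ /= sepR_monomial.
Qed.

Lemma toR_mul_eval (e : {poly F}) c (P : {poly {poly F}}) :
  'X^l - beta%:P %| e * ('X - c%:P) -> toR (e^:P * P) = sepR e P.[c%:P].
Proof.
move=> /dvdpP[g eq_g].
have [Q eq_Q] : exists Q, P - (P.[c%:P])%:P = Q * ('X - (c%:P)%:P).
  by apply/factor_theorem; rewrite /root !hornerE subrr.
have eq_gY : e^:P * ('X - (c%:P)%:P) = g^:P * ('X^l - (beta%:P)%:P).
  have := congr1 (map_poly polyC) eq_g.
  by rewrite !(rmorphM, rmorphB) /= !map_polyC map_polyXn map_polyX.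
rewrite -[P in LHS](subrK (P.[c%:P])%:P) eq_Q mulrDr mulrA [e^:P * Q]mulrC -mulrA.
by rewrite eq_gY mulrA toRD toR_mulY add0r /sepR mulrC.
Qed.

Lemma sepR_poly_mul (e d : {poly F}) n (c : nat -> F) :
  \sum_(i < n) c i *: sepR e ('X^i * d) = sepR e (\poly_(i < n) c i * d).
Proof.
rewrite poly_def mulr_suml linear_sum; apply: eq_bigr => i _.
by rewrite -scalerAl linearZZ.
Qed.

Lemma span_sepR_mulP (e d : {poly F}) u : (size e <= l)%N -> d %| Xs ->
  reflect (exists g, u = sepR e (g * d))
          (u \in <<[seq sepR e ('X^i * d) | i <- iota 0 (s - (size d).-1)]>>%VS).
Proof.
move=> size_e d_dvd; set n := (s - (size d).-1)%N.
apply: (iffP (span_iotaP _ _ _)) => [[c ->] | [g ->]].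
  by exists (\poly_(i < n) c i); rewrite sepR_poly_mul.
have Xs0 : Xs != 0 by rewrite -size_poly_gt0 size_XnsubC.
set q := Xs %/ d; have qd : q * d = Xs by rewrite divpK.
clearbody q.
have [q0 d0] : q != 0 /\ d != 0.
  by apply/andP; rewrite -negb_or -mulf_eq0 qd.
have size_gq : (size (g %% q)%R <= n)%N.
  have lt_gq : (size (g %% q)%R < size q)%N by rewrite ltn_modp.
  have := size_mul q0 d0; rewrite qd size_XnsubC //.
  move: q0 d0 lt_gq; rewrite -!size_poly_gt0 /n.
  by move: (size (g %% q)%R) (size q) (size d) => x y z; lia.
exists (fun i => (g %% q)`_i); rewrite sepR_poly_mul -/(take_poly n _) take_poly_id //.
rewrite -sepR_modp // -[RHS]sepR_modp //; congr (sepR e _).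
by rewrite {1}(divp_eq g q) mulrDl -mulrA qd modpD modp_mull add0r.
Qed.

Lemma free_sepR_mul (e d : {poly F}) : e != 0 -> (size e <= l)%N -> d %| Xs ->
  free [seq sepR e ('X^i * d) | i <- iota 0 (s - (size d).-1)].
Proof.
move=> e0 size_e d_dvd; have Xs0 : Xs != 0 by rewrite -size_poly_gt0 size_XnsubC.
have d0 : d != 0 by apply: contraTneq d_dvd => ->; rewrite dvd0p.
have size_d : (size d <= s.+1)%N by rewrite -(size_XnsubC alpha s_gt0) dvdp_leq.
apply: free_iota => c; rewrite sepR_poly_mul => /(sepR_eq0 e0 size_e).
rewrite modp_small; last first.
  rewrite size_XnsubC // ltnS (leq_trans (size_polyMleq _ _)) //.
  have := size_poly (s - (size d).-1) c; move: (\poly_(i < _) c i) => P.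
  by move: d0 size_d; rewrite -size_poly_gt0; move: (size P) (size d) => x y; lia.
move=> /eqP; rewrite mulf_eq0 (negbTE d0) orbF => /eqP poly0 i i_lt.
by have := congr1 (fun p : {poly F} => p`_i) poly0; rewrite coef_poly i_lt coef0.
Qed.

End Bivariate.

Section EtaDecomposition.
Variables (F : fieldType) (s l r : nat) (alpha beta w : F).
Hypotheses (s_gt0 : (0 < s)%N) (l_gt0 : (0 < l)%N).
Hypotheses (w_prim : (r * l).-primitive_root w) (w_l : w ^+ l = beta).
Local Notation node k := (w ^+ (1 + k * r)).
Local Notation eta := (Defs.eta l r w).
Local Notation Xs := ('X^s - alpha%:P).
Local Notation toR := (toR s l alpha beta).
Local Notation sepR := (sepR s l alpha beta).

Lemma toR_mul_eta k (P : {poly {poly F}}) : (k < l)%N ->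
  toR ((eta k)^:P * P) = sepR (eta k) P.[(node k)%:P].
Proof.
move=> kl; apply: (toR_mul_eval _ _ l_gt0); rewrite -w_l.
by have := eta_XsubC_dvd w_prim kl; apply.
Qed.

Lemma toR_eta_decomposition (P : {poly {poly F}}) :
  toR P = \sum_(k < l) sepR (eta k) P.[(node k)%:P].
Proof.
have P_eta : P = (\sum_(k < l) eta k)^:P * P by rewrite sum_eta // rmorph1 mul1r.
rewrite {1}P_eta rmorph_sum mulr_suml toR_sum //; apply: eq_bigr => k _.
exact: toR_mul_eta.
Qed.

Lemma sepR_eta_independent (f : 'I_l -> {poly F}) :
  \sum_(k < l) sepR (eta k) (f k) = 0 -> forall k, f k %% Xs = 0.
Proof.
move=> sum0 k; apply/polyP => i; rewrite coef0.
have [i_lt | i_ge] := ltnP i s; last first.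
  by rewrite nth_default // (leq_trans (size_modXs alpha s_gt0 _)).
suff comb0 : \sum_(m < l) (f m %% Xs)`_i *: eta m = 0.
  exact: (eta_comb_eq0 w_prim comb0).
apply/polyP => j; rewrite coef0 coef_sum; have [j_lt | j_ge] := ltnP j l.
  have := congr1 (fun M : 'M_(s, l) => M (Ordinal i_lt) (Ordinal j_lt)) sum0.
  rewrite summxE mxE /= => entry0; rewrite -[RHS]entry0; apply: eq_bigr => m _.
  by rewrite sepRE ?size_eta // mxE coefZ.
apply: big1 => m _; rewrite coefZ [(eta m)`_j]nth_default ?mulr0 //.
exact: leq_trans (size_eta r w (ltn_ord m)) j_ge.
Qed.

End EtaDecomposition.

Section IdealBasis.
Variables (F : fieldType) (s l r : nat) (alpha beta w : F).
Variables (C : {vspace 'M[F]_(s, l)}) (p : nat -> {poly F}).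
Hypotheses (s_gt0 : (0 < s)%N) (l_gt0 : (0 < l)%N).
Hypotheses (w_prim : (r * l).-primitive_root w) (w_l : w ^+ l = beta).
Local Notation node k := (w ^+ (1 + k * r)).
Local Notation eta := (Defs.eta l r w).
Local Notation Xs := ('X^s - alpha%:P).
Local Notation sepR := (sepR s l alpha beta).
Hypothesis C_ideal : is_idealR s l alpha beta C.
Hypothesis p_dvd : forall j, (j < l)%N -> p j %| Xs.
Hypothesis p_gen : forall j f, (j < l)%N ->
  sepR (eta j) f \in C <-> exists g, f %% Xs = (g * p j) %% Xs.
Local Notation B j :=
  [seq sepR (eta j) ('X^i * p j) | i <- iota 0 (s - (size (p j)).-1)].

Lemma ideal_components_span : (\sum_(j < l) <<B j>>)%VS = C.
Proof.
apply/eqP; rewrite eqEsubv; apply/andP; split.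
  apply/subv_sumP => j _; apply/span_subvP => _ /mapP[i _ ->].
  by apply/p_gen => //; exists 'X^i.
apply/subvP => c cC; have [P toRP] := toR_surj alpha beta s_gt0 l_gt0 c.
rewrite -{}toRP in cC *.
rewrite (toR_eta_decomposition s alpha l_gt0 w_prim w_l); apply: memv_sumr => k _.
have kl := ltn_ord k.
have /p_gen[// | g eq_g] : sepR (eta k) P.[(node k)%:P] \in C.
  by rewrite -toR_mul_eta //; apply: C_ideal.
apply/span_sepR_mulP; rewrite ?size_eta ?p_dvd //.
by exists g; rewrite -sepR_modp ?size_eta // eq_g sepR_modp ?size_eta.
Qed.

Lemma ideal_components_direct : directv (\sum_(j < l) <<B j>>).
Proof.
apply/directv_sum_independent => us us_in sum0 k _.
have /fin_all_exists[g eq_g] : forall j : 'I_l, exists g, us j = sepR (eta j) (g * p j).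
  by move=> j; apply/span_sepR_mulP: (us_in j isT); rewrite ?size_eta ?p_dvd.
have comp0 := sepR_eta_independent (alpha := alpha) (beta := beta) s_gt0 l_gt0 w_prim
  (f := fun j => g j * p j).
rewrite eq_g -sepR_modp ?size_eta // comp0 ?linear0 //.
by under eq_bigr do rewrite -eq_g.
Qed.

End IdealBasis.

Theorem theorem2 (F : finFieldType) (s l r : nat) (alpha beta w : F)
  (C : {vspace 'M[F]_(s, l)}) (p : nat -> {poly F}) :
  (0 < s)%N -> (0 < l)%N ->
  alpha != 0 -> beta != 0 ->
  r.-primitive_root beta ->
  #|F| = 1 %[mod r * l] ->
  (r * l).-primitive_root w -> w ^+ l = beta ->
  is_idealR s l alpha beta C ->
  (forall j, (j < l)%N ->
     [/\ p j \is monic, p j %| 'X^s - alpha%:P &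
         forall f : {poly F},
           toR s l alpha beta (etaf l r w j f) \in C <->
           exists g : {poly F},
             f %% ('X^s - alpha%:P) = (g * p j) %% ('X^s - alpha%:P)]) ->
  basis_of C
    [seq toR s l alpha beta (etaf l r w j ('X^i * p j))
       | j <- iota 0 l, i <- iota 0 (s - (size (p j)).-1)].
Proof.
move=> s_gt0 l_gt0 _ _ _ _ w_prim w_l C_ideal p_spec.
have p_dvd j : (j < l)%N -> p j %| 'X^s - alpha%:P by case/p_spec.
have p_gen j f : (j < l)%N -> sepR s l alpha beta (Defs.eta l r w j) f \in C <->
    exists g, f %% ('X^s - alpha%:P) = (g * p j) %% ('X^s - alpha%:P).
  by case/p_spec => _ _; apply.
rewrite allpairs_iota_bigcat /basis_of span_bigcat.
rewrite (ideal_components_span s_gt0 l_gt0 w_prim w_l C_ideal p_dvd p_gen) eqxx /=.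
apply: bigcat_free => [|j _].
  exact: (ideal_components_direct beta s_gt0 l_gt0 w_prim p_dvd).
by apply: free_sepR_mul; rewrite ?eta_neq0 ?size_eta ?p_dvd.
Qed.
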